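(* Let $G$ be a graph with girth at least $15$ and minimum degree $\delta(G)\ge 2$. Then $G\notin\mathcal U$.
   Context: All graphs are finite and simple. A set $P\subseteq V(G)$ is an open packing if no two distinct vertices of $P$ have a common neighbor; it is maximal if maximal under inclusion among open packings. $\rho^o(G)$ is the maximum size of an open packing and $\rho^o_L(G)$ the minimum size of a maximal open packing; $\mathcal U$ is the class of graphs with $\rho^o_L(G)=\rho^o(G)$. The girth is the length of a shortest cycle ($\infty$ if acyclic). *)

From mathcomp Require Import all_boot.
Set Implicit Arguments. Unset Strict Implicit. Unset Printing Implicit Defensive.

Definition simple_graph (T : finType) (e : rel T) : Prop :=
  symmetric e /\ irreflexive e.

Definition nbhd (T : finType) (e : rel T) (v : T) : {set T} := [set w | e v w].

Definition min_deg_ge (T : finType) (e : rel T) (k : nat) : Prop :=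
  forall v : T, k <= #|nbhd e v|.

Definition girth_ge (T : finType) (e : rel T) (g : nat) : Prop :=
  forall s : seq T, uniq s -> cycle e s -> 3 <= size s -> g <= size s.

Definition open_packing (T : finType) (e : rel T) (P : {set T}) : bool :=
  [forall u in P, forall v in P, (u != v) ==> [forall w, ~~ (e u w && e v w)]].

Definition maximal_open_packing (T : finType) (e : rel T) (P : {set T}) : bool :=
  open_packing e P &&
  [forall Q : {set T}, (open_packing e Q && (P \subset Q)) ==> (Q == P)].

Definition rho_o (T : finType) (e : rel T) : nat :=
  \max_(P : {set T} | open_packing e P) #|P|.

(* rho^o_L(G): minimum size of a maximal open packing
   (a maximal open packing always exists, and has size <= #|T|, so the
    default value #|T| of the iterated minimum is harmless). *)
Definition rho_o_L (T : finType) (e : rel T) : nat :=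
  \big[minn/#|T|]_(P : {set T} | maximal_open_packing e P) #|P|.

Definition in_U (T : finType) (e : rel T) : Prop := rho_o_L e = rho_o e.

From mathcomp Require Import all_boot zify.
Set Implicit Arguments. Unset Strict Implicit.

(* Take a "star": a vertex x, two neighbours p <> q of x, a neighbour y <> x
   of p and a neighbour z <> x of q.  The rim of y away from p collects, for
   every non-backtracking walk y m w with m <> p, one canonical vertex t
   reached by two further non-backtracking steps w r t; similarly for z.
   The large girth makes the seed x + rim(y) + rim(z) an open packing; let M
   be a maximal open packing containing it.  No u <> x in M shares a
   neighbour c with y: for c = p, u would share p with x, and otherwise u
   would share a neighbour with the rim vertex reached through c and u.  So
   swapping x for y and z yields an open packing of size #|M| + 1, whence
   rho_o_L < rho_o.

   Every girth argument is reduced to one fact (Sections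
   NonBacktrackingWalks and SeqPaths): two non-backtracking walks with common
   ends and total length below the girth have equal lengths; in particular
   two vertices joined by a non-backtracking path of length <> 2 and less
   than girth - 2 have no common neighbour. *)

Section OpenPackings.
Variables (T : finType) (e : rel T).

Definition no_common_nbr (a b : T) : Prop := a != b -> forall c, e a c -> e b c -> False.

Lemma no_common_nbr_sym a b : no_common_nbr a b -> no_common_nbr b a.
Proof. by move=> H ba c bc ac; apply: (H _ c) => //; rewrite eq_sym. Qed.

Lemma no_common_nbr_refl a : no_common_nbr a a.
Proof. by rewrite /no_common_nbr eqxx. Qed.

Lemma open_packingP (P : {set T}) :
  reflect (forall u v, u \in P -> v \in P -> no_common_nbr u v) (open_packing e P).
Proof.
apply: (iffP idP).
  move=> /forall_inP oP u v uP vP uv w euw evw.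
  have /forall_inP /(_ v vP) /implyP /(_ uv) /forallP /(_ w) := oP u uP.
  by rewrite euw evw.
move=> oP; apply/forall_inP => u uP; apply/forall_inP => v vP; apply/implyP => uv.
by apply/forallP => w; apply/negP => /andP[]; apply: oP.
Qed.

(* Every open packing extends to a maximal one (take a largest open packing
   containing it). *)
Lemma maximal_superset (Q : {set T}) : open_packing e Q ->
  exists2 M, maximal_open_packing e M & Q \subset M.
Proof.
move=> oQ; pose above := [pred P : {set T} | open_packing e P && (Q \subset P)].
have aboveQ : above Q by rewrite /= oQ subxx.
case: (arg_maxnP (fun P : {set T} => #|P|) aboveQ) => M /andP[oM QM] Mmax.
exists M => //; rewrite /maximal_open_packing oM /=.
apply/forallP => R; apply/implyP => /andP[oR MR].
rewrite eq_sym eqEcard MR; apply: Mmax.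
by rewrite /= oR (subset_trans QM MR).
Qed.

Lemma rho_o_L_le (M : {set T}) : maximal_open_packing e M -> rho_o_L e <= #|M|.
Proof.
move=> maxM; rewrite /rho_o_L unlock.
have : M \in index_enum {set T} by rewrite mem_index_enum.
elim: (index_enum _) => //= P s IH; rewrite in_cons => /orP[/eqP <-|/IH le_s].
  by rewrite maxM geq_minl.
by case: (maximal_open_packing e P) => //; apply: leq_trans (geq_minr _ _) le_s.
Qed.

Lemma not_in_U_of_larger_packing (M N : {set T}) :
  maximal_open_packing e M -> open_packing e N -> #|M| < #|N| -> ~ in_U e.
Proof.
move=> maxM oN MN UE.
have N_le : #|N| <= rho_o e by apply: (@leq_bigmax_cond _ (open_packing e)).
by have := leq_trans MN N_le; rewrite -UE ltnNge rho_o_L_le.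
Qed.

Lemma packing_excludes (M : {set T}) a b c : open_packing e M -> a \in M ->
  a != b -> e a c -> e b c -> b \notin M.
Proof.
by move=> /open_packingP oM aM ab ac bc; apply/negP => bM; apply: (oM a b aM bM ab c).
Qed.

End OpenPackings.

Section NonBacktrackingWalks.
Variables (T : finType) (e : rel T).
Hypothesis sg : simple_graph e.

Definition nb_walk (f : nat -> T) (L : nat) : Prop :=
  (forall i, i < L -> e (f i) (f i.+1)) /\ (forall i, i.+2 <= L -> f i != f i.+2).

Lemma closed_segment_cycle f L i d : nb_walk f L -> 0 < d -> i + d <= L ->
  f i = f (i + d) -> cycle e [seq f k | k <- iota i d].
Proof.
move=> [fe _] d0 idL fid.
have nth_seg k : k < d -> nth (f 0) [seq f k | k <- iota i d] k = f (i + k).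
  by move=> kd; rewrite (nth_map 0) ?size_iota // nth_iota.
rewrite (cycle_path (f 0)) -nth_last size_map size_iota.
apply/(pathP (f 0)) => k; rewrite size_map size_iota => kd.
case: k kd => [|k] kd /=.
  rewrite !nth_seg ?addn0 ?fid; try lia.
  have -> : i + d = (i + d.-1).+1 by lia.
  apply: fe; lia.
rewrite !nth_seg; try lia.
have -> : i + k.+1 = (i + k).+1 by lia.
apply: fe; lia.
Qed.

(* A closed segment of a non-backtracking walk is at least as long as the
   girth: a shortest repeated vertex pair bounds a genuine cycle. *)
Lemma nb_walk_closed g f L : girth_ge e g -> nb_walk f L ->
  forall d i, 0 < d -> i + d <= L -> f i = f (i + d) -> g <= d.
Proof.
move=> gir fw; have [fe fnb] := fw; have [_ eirr] := sg.
elim/ltn_ind=> d IH i d0 idL fid.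
set s := [seq f k | k <- iota i d].
have size_s : size s = d by rewrite size_map size_iota.
have nth_s k : k < d -> nth (f 0) s k = f (i + k).
  by move=> kd; rewrite (nth_map 0) ?size_iota // nth_iota.
have [us|] := boolP (uniq s).
  have d3 : 2 < d.
    case: d d0 idL fid {IH s size_s nth_s us} => // [[|[|d]]] // _.
      by rewrite addn1 => idL fi; have := fe i idL; rewrite -fi eirr.
    by rewrite addn2 => idL fi; have := fnb i idL; rewrite -fi eqxx.
  rewrite -size_s; apply: gir; rewrite ?size_s //.
  exact: closed_segment_cycle fw d0 idL fid.
case/(uniqPn (f 0)) => k1 [k2 [k12 k2s]]; rewrite size_s in k2s.
rewrite !nth_s; try lia.
have -> : i + k2 = i + k1 + (k2 - k1) by lia.
move=> /(IH (k2 - k1)) H; have := H ltac:(lia) ltac:(lia) ltac:(lia); lia.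
Qed.

Definition join_walks (f h : nat -> T) (n i : nat) : T :=
  if i <= n then f (n - i) else h (i - n).

Lemma nb_walk_join f h n m : nb_walk f n.+1 -> nb_walk h m.+1 ->
  f 0 = h 0 -> f 1 != h 1 -> nb_walk (join_walks f h n.+1) (n.+1 + m.+1).
Proof.
move=> [fe fnb] [he hnb] f0 f1; have [esym _] := sg; rewrite /join_walks.
split=> i iL.
  have [le_i1|lt_n_i] := leqP i.+1 n.+1.
    rewrite !ifT; try lia.
    rewrite esym.
    have -> : n.+1 - i = (n.+1 - i.+1).+1 by lia.
    apply: fe; lia.
  have [le_in|lt_in] := leqP i n.+1.
    have -> : i = n.+1 by lia.
    rewrite subnn subSnn f0.
    apply: he; lia.
  have -> : i.+1 - n.+1 = (i - n.+1).+1 by lia.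
  apply: he; lia.
have [le_i2|lt_i2] := leqP i.+2 n.+1.
  rewrite !ifT; try lia.
  have -> : n.+1 - i = (n.+1 - i.+2).+2 by lia.
  rewrite eq_sym; apply: fnb; lia.
have [le_in|lt_in] := leqP i n.+1.
  have [->|ne_in] := eqVneq i n.
    have -> : n.+2 - n.+1 = 1 by lia.
    by have -> : n.+1 - n = 1 by lia.
  have -> : i = n.+1 by lia.
  rewrite subnn f0.
  have -> : n.+3 - n.+1 = 2 by lia.
  apply: hnb; lia.
have -> : i.+2 - n.+1 = (i - n.+1).+2 by lia.
apply: hnb; lia.
Qed.

(* Two non-backtracking walks with common endpoints and total length below the
   girth have the same length: strip their common first steps, then the
   joined walk would be a closed walk shorter than the girth. *)
Lemma nb_walks_same_length g : girth_ge e g -> forall L1 L2 f h,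
  nb_walk f L1 -> nb_walk h L2 -> f 0 = h 0 -> f L1 = h L2 -> L1 + L2 < g -> L1 = L2.
Proof.
move=> gir; elim=> [|n IH] [|m] f h fw hw f0 fL lt_g //.
- have := nb_walk_closed gir hw (i:=0) (d:=m.+1) erefl (leqnn _).
  rewrite add0n -fL f0 => /(_ erefl); lia.
- have := nb_walk_closed gir fw (i:=0) (d:=n.+1) erefl (leqnn _).
  rewrite add0n fL f0 => /(_ erefl); lia.
have [fe fnb] := fw; have [he hnb] := hw.
have [f1|f1] := eqVneq (f 1) (h 1).
  congr S; apply: (IH m (fun i => f i.+1) (fun i => h i.+1)) => //; try lia.
    split=> i iL; [apply: fe|apply: fnb]; lia.
  split=> i iL; [apply: he|apply: hnb]; lia.
have := nb_walk_closed gir (nb_walk_join fw hw f0 f1) (i:=0) (d:=n.+1 + m.+1)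
  erefl (leqnn _).
rewrite /join_walks add0n leq0n subn0 ifF; last by lia.
have -> : n.+1 + m.+1 - n.+1 = m.+1 by lia.
move=> /(_ fL); lia.
Qed.

End NonBacktrackingWalks.

Section SeqPaths.
Variables (T : finType) (e : rel T).
Hypothesis sg : simple_graph e.

Fixpoint non_backtracking (s : seq T) : bool :=
  if s is x :: s' then
    (if s' is _ :: z :: _ then x != z else true) && non_backtracking s'
  else true.

Lemma non_backtrackingP x0 s : non_backtracking s ->
  forall i, i.+2 < size s -> nth x0 s i != nth x0 s i.+2.
Proof.
elim: s => //= x s IH /andP[nb_x nb_s] [|i] /=; last exact: IH.
by case: s nb_x {IH nb_s} => // y [|z s].
Qed.

Lemma path_nb_walk a s : path e a s -> non_backtracking (a :: s) ->
  nb_walk e (nth a (a :: s)) (size s).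
Proof.
move=> /(pathP a) pe nb; split=> i iL; first exact: pe.
apply: non_backtrackingP => //=; lia.
Qed.

Lemma nb_paths_same_length g a s1 s2 : girth_ge e g ->
  path e a s1 -> path e a s2 -> non_backtracking (a :: s1) -> non_backtracking (a :: s2) ->
  last a s1 = last a s2 -> size s1 + size s2 < g -> size s1 = size s2.
Proof.
move=> gir p1 p2 nb1 nb2 l12.
apply: (nb_walks_same_length sg gir (path_nb_walk p1 nb1) (path_nb_walk p2 nb2)) => //.
by rewrite [LHS](nth_last a (a :: s1)) [RHS](nth_last a (a :: s2)).
Qed.

(* Ends of a non-backtracking path of length <> 2 and less than girth - 2
   have no common neighbour: the path a c b would be a second, differently
   long, non-backtracking path. *)
Lemma nb_path_no_common_nbr g a s : girth_ge e g ->
  path e a s -> non_backtracking (a :: s) -> size s != 2 -> size s + 2 < g ->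
  no_common_nbr e a (last a s).
Proof.
move=> gir ps nbs s2 lt_g ab c ac bc; have [esym _] := sg.
have := @nb_paths_same_length g a s [:: c; last a s] gir ps.
rewrite /= ac esym bc ab => /(_ erefl nbs erefl erefl lt_g) /eqP.
by rewrite (negbTE s2).
Qed.

End SeqPaths.

Section Rims.
Variables (T : finType) (e : rel T).
Hypotheses (sg : simple_graph e) (gir : girth_ge e 15) (md : min_deg_ge e 2).

(* A neighbour of v different from u; it exists when degrees are >= 2. *)
Definition other_nbr (v u : T) : T := odflt v [pick w | e v w && (w != u)].

Lemma other_nbrP v u : e v (other_nbr v u) /\ other_nbr v u != u.
Proof.
rewrite /other_nbr; case: pickP => [w /andP[] //|none].
have : 0 < #|nbhd e v :\ u|.
  by have := md v; rewrite (cardsD1 u); case: (u \in _) => /=; lia.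
case/card_gt0P => w; rewrite !inE => /andP[wu evw].
by have := none w; rewrite evw wu.
Qed.

Definition rim (y p : T) : {set T} :=
  [set t | [exists m, exists w, [&& e y m, m != p, e m w, w != y &
     t == other_nbr (other_nbr w m) w]]].

Lemma rimP y p t : t \in rim y p ->
  exists m w r, [/\ [/\ e y m, m != p, e m w & w != y],
     [/\ e w r, r != m, e r t & t != w] & (r = other_nbr w m /\ t = other_nbr r w)].
Proof.
rewrite inE => /existsP[m /existsP[w /and5P[ym mp mw wy /eqP tE]]].
exists m, w, (other_nbr w m).
have [wr rm] := other_nbrP w m; have [rt tw] := other_nbrP (other_nbr w m) w.
by rewrite -tE in rt tw.
Qed.

Lemma rim_mem y p m u : e y m -> m != p -> e m u -> u != y ->
  other_nbr (other_nbr u m) u \in rim y p.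
Proof.
move=> ym mp mu uy; rewrite inE; apply/existsP; exists m; apply/existsP; exists u.
by rewrite ym mp mu uy eqxx.
Qed.

Ltac close_path :=
  rewrite /=; repeat (apply/andP; split); try (by []); try (by rewrite eq_sym).

(* Two vertices of the same rim are joined by a non-backtracking path of
   length 6 (through a common m) or 8 (through y), so they share no
   neighbour. *)
Lemma rim_rim y p t1 t2 : t1 \in rim y p -> t2 \in rim y p -> no_common_nbr e t1 t2.
Proof.
have esym := sg.1.
move=> /rimP[m1 [w1 [r1 [[y1 m1p m1w w1y] [w1r r1m r1t t1w] [r1E t1E]]]]].
move=> /rimP[m2 [w2 [r2 [[y2 m2p m2w w2y] [w2r r2m r2t t2w] [r2E t2E]]]]].
have [Em|m12] := eqVneq m1 m2; first subst m2.
  have [Ew|w12] := eqVneq w1 w2; first subst w2.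
    by rewrite t1E t2E r1E r2E; apply: no_common_nbr_refl.
  apply: (@nb_path_no_common_nbr _ e sg 15 t1 [:: r1; w1; m1; w2; r2; t2]) => //.
    by close_path; rewrite esym.
  by close_path.
apply: (@nb_path_no_common_nbr _ e sg 15 t1 [:: r1; w1; m1; y; m2; w2; r2; t2]) => //.
  by close_path; rewrite esym.
by close_path.
Qed.

(* x and a rim vertex of y are joined by a non-backtracking path x p y m w r t. *)
Lemma center_rim x p y t : e x p -> e p y -> y != x -> t \in rim y p ->
  no_common_nbr e x t.
Proof.
move=> xp py yx /rimP[m [w [r [[ym mp mw wy] [wr rm rt tw] _]]]].
by apply: (@nb_path_no_common_nbr _ e sg 15 x [:: p; y; m; w; r; t]) => //;
  close_path.
Qed.

(* Key step: if an open packing M contains x and the rim of y (with x p y),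
   then no other vertex u of M shares a neighbour c with y; for c <> p, u and
   the rim vertex reached through c and u would share a neighbour. *)
Lemma rim_guard (M : {set T}) x p y : open_packing e M -> x \in M -> e x p ->
  rim y p \subset M -> forall u, u \in M -> u != x -> no_common_nbr e y u.
Proof.
move=> /open_packingP oM xM xp rimM u uM ux yu c yc uc; have [esym _] := sg.
have [cp|cp] := eqVneq c p; first by subst c; apply: (oM u x uM xM ux p).
have [ur rc] := other_nbrP u c; set r := other_nbr u c in ur rc.
have [rt tu] := other_nbrP r u.
have tM : other_nbr r u \in M.
  apply: (subsetP rimM); apply: rim_mem => //.
    by rewrite esym.
  by rewrite eq_sym.
by apply: (oM u _ uM tM _ r) => //; rewrite 1?eq_sym // esym.
Qed.

Section Star.
Variables x p q y z : T.
Hypotheses (xp : e x p) (py : e p y) (xq : e x q) (qz : e q z).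
Hypotheses (yx : y != x) (zx : z != x) (pq : p != q).

(* Rim vertices of y and of z are joined by a non-backtracking path of
   length 12 through the star. *)
Lemma rim_cross t1 t2 : t1 \in rim y p -> t2 \in rim z q -> no_common_nbr e t1 t2.
Proof.
have esym := sg.1.
move=> /rimP[m1 [w1 [r1 [[y1 m1p m1w w1y] [w1r r1m r1t t1w] _]]]].
move=> /rimP[m2 [w2 [r2 [[y2 m2p m2w w2y] [w2r r2m r2t t2w] _]]]].
apply: (@nb_path_no_common_nbr _ e sg 15 t1
  [:: r1; w1; m1; y; p; x; q; z; m2; w2; r2; t2]) => //.
  by close_path; rewrite esym.
by close_path.
Qed.

Definition seed : {set T} := x |: (rim y p :|: rim z q).

Lemma seed_packing : open_packing e seed.
Proof.
apply/open_packingP => u v; rewrite !in_setU1 !in_setU.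
case/orP=> [/eqP->|/orP[uY|uZ]]; case/orP=> [/eqP->|/orP[vY|vZ]].
- exact: no_common_nbr_refl.
- exact: center_rim vY.
- exact: center_rim vZ.
- exact/no_common_nbr_sym/(center_rim xp py yx uY).
- exact: rim_rim uY vY.
- exact: rim_cross uY vZ.
- exact/no_common_nbr_sym/(center_rim xq qz zx uZ).
- exact/no_common_nbr_sym/(rim_cross vY uZ).
- exact: rim_rim uZ vZ.
Qed.

(* y <> z, since y p x q y would be a 4-cycle. *)
Lemma leaves_distinct : y != z.
Proof.
apply/eqP => yz; have [esym _] := sg; have qy : e q y by rewrite yz.
have := @nb_paths_same_length _ e sg 15 y [:: p; x; q; y] [::] gir.
rewrite /= esym py esym xp xq qy (eq_sym x y) yx pq.
by move=> /(_ erefl erefl erefl erefl erefl erefl).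
Qed.

(* y and z are joined by the non-backtracking path y p x q z. *)
Lemma leaves_no_common_nbr : no_common_nbr e y z.
Proof.
have [esym _] := sg.
apply: (@nb_path_no_common_nbr _ e sg 15 y [:: p; x; q; z]) => //.
  by close_path; rewrite esym.
by close_path.
Qed.

Definition swap (M : {set T}) : {set T} := y |: (z |: (M :\ x)).

Lemma seed_sub_rims (M : {set T}) : seed \subset M ->
  [/\ x \in M, rim y p \subset M & rim z q \subset M].
Proof.
move=> seedM; split; first by apply: (subsetP seedM); rewrite setU11.
  by apply/subsetP => t tS; apply: (subsetP seedM); rewrite !in_setU tS !orbT.
by apply/subsetP => t tS; apply: (subsetP seedM); rewrite !in_setU tS !orbT.
Qed.

Lemma swap_packing (M : {set T}) :
  open_packing e M -> seed \subset M -> open_packing e (swap M).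
Proof.
move=> oM /seed_sub_rims[xM rimyM rimzM].
have guard_y := rim_guard oM xM xp rimyM; have guard_z := rim_guard oM xM xq rimzM.
have /open_packingP oM' := oM.
apply/open_packingP => u v; rewrite !in_setU1 !in_setD1.
case/orP=> [/eqP->|/orP[/eqP->|/andP[ux uM]]];
  case/orP=> [/eqP->|/orP[/eqP->|/andP[vx vM]]].
- exact: no_common_nbr_refl.
- exact: leaves_no_common_nbr.
- exact: guard_y.
- exact/no_common_nbr_sym/leaves_no_common_nbr.
- exact: no_common_nbr_refl.
- exact: guard_z.
- exact/no_common_nbr_sym/guard_y.
- exact/no_common_nbr_sym/guard_z.
- exact: oM'.
Qed.

(* y and z share p, q with x, so they are new: the swap gains one vertex. *)
Lemma swap_card (M : {set T}) :
  open_packing e M -> seed \subset M -> #|swap M| = #|M|.+1.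
Proof.
move=> oM /seed_sub_rims[xM _ _]; have [esym _] := sg.
have yM : y \notin M.
  by apply: (packing_excludes oM xM _ xp); rewrite 1?eq_sym // esym.
have zM : z \notin M.
  by apply: (packing_excludes oM xM _ xq); rewrite 1?eq_sym // esym.
rewrite /swap cardsU1 cardsU1 (cardsD1 x M) xM !in_setU1 !in_setD1.
by rewrite (negbTE leaves_distinct) (negbTE yM) (negbTE zM) !andbF.
Qed.

Lemma star_not_in_U : ~ in_U e.
Proof.
have [M maxM seedM] := maximal_superset seed_packing.
have oM : open_packing e M by case/andP: maxM.
apply: (not_in_U_of_larger_packing maxM (swap_packing oM seedM)).
by rewrite swap_card.
Qed.

End Star.

End Rims.

Theorem lemma2 (T : finType) (e : rel T) :
  simple_graph e -> 0 < #|T| ->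
  girth_ge e 15 -> min_deg_ge e 2 ->
  ~ in_U e.
Proof.
move=> sg /card_gt0P[x _] gir md.
have [xp _] := other_nbrP md x x; set p := other_nbr e x x in xp.
have [xq qp] := other_nbrP md x p; set q := other_nbr e x p in xq qp.
have [py yx] := other_nbrP md p x; set y := other_nbr e p x in py yx.
have [qz zx] := other_nbrP md q x; set z := other_nbr e q x in qz zx.
by apply: (star_not_in_U sg gir md xp py xq qz yx zx); rewrite eq_sym.
Qed.
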